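(* Let $f:\mathbb{R}^n\to\mathbb{R}$ be $r+1$ times continuously differentiable for some integer $r\ge1$, with $\nabla f$ Lipschitz continuous with constant $L$. Let $x^*$ satisfy $\nabla f(x^* )=0$, and write $\nabla^2 f(x^* )=\sum_{i=1}^n\lambda_i v_iv_i^T$ with $\{v_1,\dots,v_n\}$ orthonormal and \[ \lambda_1\ge\dots\ge\lambda_{n-p}\ge 0>\lambda_{n-p+1}\ge\dots\ge\lambda_n \] for some $1\le p<n$; suppose $\lambda_1>0$. Let $0<\alpha<4/\lambda_1$ and $\beta\in(\max(-1+\alpha\lambda_1/2,0),1)$, and let \[ DG(x^*,x^* )=\begin{bmatrix}(1+\beta)I-\alpha\nabla^2 f(x^* ) & -\beta I\\ I & 0\end{bmatrix}. \] For $i=n-p+1,\dots,n$ define \[ \mu_i^{\mathrm{hi}}=\tfrac12\Big[(1+\beta-\alpha\lambda_i)+\sqrt{(1+\beta-\alpha\lambda_i)^2-4\beta}\Big], \] which is a real eigenvalue of $DG(x^*,x^* )$ with $\mu_i^{\mathrm{hi}}>1$. Then for each $i=n-p+1,\dots,n$, the vector $\begin{bmatrix} v_i\\ (1/\mu_i^{\mathrm{hi}})v_i\end{bmatrix}\in\mathbb{R}^{2n}$ is an eigenvector of $DG(x^*,x^* )$ corresponding to the eigenvalue $\mu_i^{\mathrm{hi}}$, and the set of these $p$ vectors forms an orthogonal basis for the invariant subspace of $\mathbb{R}^{2n}$ corresponding to the eigenvalues of $DG(x^*,x^* )$ whose magnitude is greater than $1$.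
   Context: $DG(x^*,x^* )$ is the Jacobian at $(x^*,x^* )$ of the heavy-ball map $G(z_1,z_2)=(z_1-\alpha\nabla f(z_1)+\beta(z_1-z_2),\,z_1)$. The invariant subspace corresponding to eigenvalues of magnitude greater than $1$ is the sum of the (generalized) eigenspaces of $DG(x^*,x^* )$ for eigenvalues of modulus greater than $1$. *)

From HB Require Import structures.
From mathcomp Require Import all_boot all_order all_algebra.
From mathcomp Require Import all_classical all_reals all_analysis.
From mathcomp Require Import complex.
Set Implicit Arguments. Unset Strict Implicit. Unset Printing Implicit Defensive.
Import Order.TTheory GRing.Theory Num.Theory.
Import numFieldNormedType.Exports.
Local Open Scope ring_scope.

Section Defs.
Variables (R : realType) (n : nat).

Definition ebasis (i : 'I_n) : 'cV[R]_n := delta_mx i 0.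

Definition partial (i : 'I_n) (g : 'cV[R]_n -> R) : 'cV[R]_n -> R :=
  fun x => 'D_(ebasis i) g x.

Fixpoint Ck (k : nat) (g : 'cV[R]_n -> R) : Prop :=
  match k with
  | 0 => continuous g
  | k.+1 => continuous g /\
      forall i : 'I_n, (forall x, derivable g x (ebasis i)) /\ Ck k (partial i g)
  end.

Definition grad (g : 'cV[R]_n -> R) (x : 'cV[R]_n) : 'cV[R]_n :=
  \col_i partial i g x.

Definition hessian (g : 'cV[R]_n -> R) (x : 'cV[R]_n) : 'M[R]_n :=
  \matrix_(i, j) partial j (partial i g) x.

Definition enorm (v : 'cV[R]_n) : R := Num.sqrt (\sum_i v i 0 ^+ 2).

Definition grad_lipschitz (g : 'cV[R]_n -> R) (L : R) : Prop :=
  forall x y, enorm (grad g x - grad g y) <= L * enorm (x - y).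

End Defs.

(* Jacobian of the heavy-ball map at (xs, xs) *)
Definition DG (R : realType) (n : nat) (alpha beta : R) (H : 'M[R]_n)
  : 'M[R]_(n + n) :=
  block_mx ((1 + beta)%:M - alpha *: H) (- beta%:M) 1%:M 0.

Definition cplx (R : realType) (m k : nat) (A : 'M[R]_(m, k)) : 'M[(complex R)]_(m, k) :=
  map_mx (fun x => (x%:C)%C) A.

Definition gen_eigvec (C : fieldType) (N : nat) (A : 'M[C]_N) (mu : C)
  (w : 'cV[C]_N) : Prop :=
  exists m : nat, (A - mu%:M) ^+ m *m w = 0.

(* the sum (over C) of the generalized eigenspaces of A for the
   eigenvalues of modulus > 1 : finite sums of generalized eigenvectors
   whose eigenvalues have modulus > 1 *)
Definition in_unstable_csubspace (R : realType) (N : nat) (A : 'M[(complex R)]_N)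
  (w : 'cV[(complex R)]_N) : Prop :=
  exists (s : seq ((complex R) * 'cV[(complex R)]_N)),
    (forall q, q \in s -> 1 < `|q.1| /\ q.1 \in root (char_poly A)
                         /\ gen_eigvec A q.1 q.2) /\
    w = \sum_(q <- s) q.2.

Definition in_unstable_subspace (R : realType) (N : nat) (A : 'M[R]_N)
  (w : 'cV[R]_N) : Prop :=
  in_unstable_csubspace (cplx A) (cplx w).

Definition mu_hi (R : realType) (alpha beta l : R) : R :=
  2^-1 * ((1 + beta - alpha * l)
          + Num.sqrt ((1 + beta - alpha * l) ^+ 2 - 4 * beta)).

Definition stack_vec (R : realType) (n : nat) (mu : R) (v : 'cV[R]_n)
  : 'cV[R]_(n + n) :=
  col_mx v (mu^-1 *: v).

From HB Require Import structures.
From mathcomp Require Import all_boot all_order all_algebra.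
From mathcomp Require Import all_classical all_reals all_analysis.
From mathcomp Require Import complex ring lra.
Set Implicit Arguments. Unset Strict Implicit. Unset Printing Implicit Defensive.
Import Order.TTheory GRing.Theory Num.Theory.
Import numFieldNormedType.Exports.
Local Open Scope ring_scope.

(* In the orthonormal eigenbasis v_i of the Hessian, DG decouples: for a vector
   [y; z] of R^(2n), the pair (v_i^T y, v_i^T z) is mapped by the companion
   matrix [[t_i, -beta], [1, 0]], t_i = 1 + beta - alpha lam_i, whose
   characteristic polynomial is X^2 - t_i X + beta.  When lam_i >= 0 the
   step-size conditions give |t_i| <= 1 + beta, so both roots lie in the closed
   unit disk and the two coordinates vanish on every generalized eigenvector
   for an eigenvalue of modulus > 1.  When lam_i < 0 the roots are real,
   mu_lo < 1 < mu_hi with mu_lo mu_hi = beta, and mu_lo (v_i^T, 0) - beta (0, v_i^T)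
   is a left eigenvector for mu_lo; it therefore annihilates the unstable
   subspace, which forces v_i^T z = (v_i^T y) / mu_hi there.  Expanding y and z
   in the basis v_i writes every unstable vector as a combination of the
   [v_i; v_i / mu_hi]. *)

Lemma char_poly_trmx (F : fieldType) N (M : 'M[F]_N) : char_poly M^T = char_poly M.
Proof.
rewrite /char_poly -det_tr; congr (\det _).
by apply/matrixP => i j; rewrite !mxE eq_sym.
Qed.

Lemma eigenvector_root_char (F : fieldType) N (M : 'M[F]_N) mu (w : 'cV[F]_N) :
  w != 0 -> M *m w = mu *: w -> root (char_poly M) mu.
Proof.
move=> w_neq0 Mw; rewrite -char_poly_trmx -eigenvalue_root_char.
apply/eigenvalueP; exists w^T; last by rewrite trmx_eq0.
by rewrite -trmx_mul Mw linearZ.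
Qed.

Section CompanionBlock.
Variables (F : fieldType) (N : nat) (M : 'M[F]_N).

Lemma left_eigen_genvec_orthogonal (phi : 'rV[F]_N) nu mu (w : 'cV[F]_N) :
  phi *m M = nu *: phi -> nu != mu -> gen_eigvec M mu w -> phi *m w = 0.
Proof.
move=> phiM nu_neq_mu [m Mw].
have phiX k : phi *m (M - mu%:M) ^+ k = (nu - mu) ^+ k *: phi.
  elim: k => [|k IHk]; first by rewrite expr0 mulmx1 scale1r.
  by rewrite exprSr mulmxA IHk -scalemxAl mulmxBr phiM mul_mx_scalar -scalerBl
    scalerA -exprSr.
have : (nu - mu) ^+ m *: (phi *m w) = 0 by rewrite scalemxAl -phiX -mulmxA Mw mulmx0.
by move/eqP; rewrite scaler_eq0 expf_eq0 subr_eq0 (negbTE nu_neq_mu) andbF => /eqP.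
Qed.

Variables (a b : 'rV[F]_N) (t s : F).
Hypotheses (aM : a *m M = t *: a - s *: b) (bM : b *m M = a).

Lemma companion_left_eigen nu : nu ^+ 2 - t * nu + s = 0 ->
  (nu *: a - s *: b) *m M = nu *: (nu *: a - s *: b).
Proof.
move=> nu_root; rewrite mulmxBl -!scalemxAl aM bM !scalerBr !scalerA.
have -> : nu * nu = nu * t - s by apply: subr0_eq; rewrite -nu_root; ring.
by rewrite scalerBl addrAC.
Qed.

Lemma companion_genvec_orthogonal mu (w : 'cV[F]_N) : mu ^+ 2 - t * mu + s != 0 ->
  gen_eigvec M mu w -> a *m w = 0 /\ b *m w = 0.
Proof.
move=> mu_nonroot [m]; elim: m w => [|m IHm] w.
  by rewrite expr0 mul1mx => ->; rewrite !mulmx0.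
rewrite exprSr -mulmxA => /IHm[].
rewrite !mulmxA mulmxBr mulmxBr aM bM !mul_mx_scalar.
set x := a *m w; set y := b *m w.
rewrite !mulmxBl -!scalemxAl -/x -/y => e1 /eqP; rewrite subr_eq0 => /eqP xE.
move: e1; rewrite xE !scalerA -!scalerBl.
have -> : t * mu - s - mu * mu = - (mu ^+ 2 - t * mu + s) by ring.
move/eqP; rewrite scaler_eq0 oppr_eq0 (negbTE mu_nonroot) /= => /eqP y0.
by rewrite y0 scaler0.
Qed.

End CompanionBlock.

Section HeavyBallRoots.
Variables (R : realType) (alpha beta l : R).
Hypotheses (beta_gt0 : 0 < beta) (alpha_l_lt0 : alpha * l < 0).

Definition mu_lo : R :=
  2^-1 * ((1 + beta - alpha * l) - Num.sqrt ((1 + beta - alpha * l) ^+ 2 - 4 * beta)).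

(* lra and nra ignore section hypotheses, hence the explicit [move:]s below. *)
Let t := 1 + beta - alpha * l.
Let sq := Num.sqrt (t ^+ 2 - 4 * beta).

Let sq_ge0 : 0 <= sq. Proof. exact: sqrtr_ge0. Qed.
Let t_gt : 1 + beta < t. Proof. by move: alpha_l_lt0; rewrite /t; lra. Qed.
Let sqE : sq ^+ 2 = t ^+ 2 - 4 * beta.
Proof.
rewrite sqr_sqrtr //.
have : 0 < (t - (1 + beta)) * (t + (1 + beta)) by apply: mulr_gt0; move: beta_gt0 t_gt; lra.
by move: beta_gt0 t_gt (sqr_ge0 (1 - beta)); nra.
Qed.

Lemma mu_hi_root : mu_hi alpha beta l ^+ 2 - t * mu_hi alpha beta l + beta = 0.
Proof. by rewrite /mu_hi -/t -/sq; move: sqE; nra. Qed.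

Lemma mu_lo_root : mu_lo ^+ 2 - t * mu_lo + beta = 0.
Proof. by rewrite /mu_lo -/t -/sq; move: sqE; nra. Qed.

Lemma mu_hi_mul_lo : mu_hi alpha beta l * mu_lo = beta.
Proof. by rewrite /mu_hi /mu_lo -/t -/sq; move: sqE; nra. Qed.

Lemma mu_hi_gt1 : 1 < mu_hi alpha beta l.
Proof. by rewrite /mu_hi -/t -/sq; move: sq_ge0 sqE t_gt beta_gt0; nra. Qed.

Lemma mu_lo_gt0 : 0 < mu_lo.
Proof. by rewrite /mu_lo -/t -/sq; move: sq_ge0 sqE t_gt beta_gt0; nra. Qed.

Lemma mu_lo_lt1 : mu_lo < 1.
Proof. by rewrite /mu_lo -/t -/sq; move: sq_ge0 sqE t_gt beta_gt0; nra. Qed.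

End HeavyBallRoots.

Section ComplexDisk.
Variable R : realType.

Lemma normc_gt1 (z : complex R) : 1 < `|z| -> 1 < complex.Re z ^+ 2 + complex.Im z ^+ 2.
Proof.
rewrite normc_def ltcE /= => /andP[_ sqrt_gt1].
by rewrite ltNge; apply: contraTN sqrt_gt1 => le1; rewrite -leNgt -sqrtr1 ler_sqrt.
Qed.

Lemma real_neq_out_disk (x : R) (z : complex R) : `|x| <= 1 -> 1 < `|z| -> z != x%:C%C.
Proof.
move=> x_le1 /normc_gt1; apply: contraTneq => -> /=.
rewrite expr0n addr0 -leNgt.
by move: x_le1; rewrite ler_norml => /andP[? ?]; nra.
Qed.

Lemma quadratic_roots_in_disk (s t : R) (z : complex R) :
  s <= 1 -> - (1 + s) <= t <= 1 + s -> 1 < `|z| ->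
  z ^+ 2 - t%:C%C * z + s%:C%C != 0.
Proof.
move=> s_le1 /andP[t_ge t_le]; case: z => a b /normc_gt1 /= ab_gt1.
apply/negP; rewrite eq_complex /= => /andP[/eqP re /eqP im].
have [b0|b_neq0] := eqVneq b 0.
  move: ab_gt1 re; rewrite {}b0 expr0n addr0 ?mulr0 ?mul0r ?subr0 ?addr0 => a_gt1 re.
  have [a_gt0|a_le0] := ltrP 0 a.
    have : 0 < (a - 1) * (a - s) by apply: mulr_gt0; nra.
    nra.
  have : 0 < (- a - 1) * (- a - s) by apply: mulr_gt0; nra.
  nra.
have t2a : t = 2 * a.
  have /eqP : b * (2 * a - t) = 0 by rewrite -im; ring.
  by rewrite mulf_eq0 (negbTE b_neq0) /= subr_eq0 => /eqP.
move: re; rewrite t2a; nra.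
Qed.

End ComplexDisk.

Lemma in_unstable_subspace_annihilated (R : realType) N (A : 'M[R]_N)
    (phi : 'rV[R]_N) (w : 'cV[R]_N) :
  (forall mu x, 1 < `|mu| -> gen_eigvec (cplx A) mu x -> cplx phi *m x = 0) ->
  in_unstable_subspace A w -> phi *m w = 0.
Proof.
move=> phi_kills [s [s_gen w_sum]].
have : cplx (phi *m w) = 0.
  rewrite /cplx map_mxM -/(cplx phi) -/(cplx w) w_sum mulmx_sumr.
  by apply: big1_seq => q /andP[_ /s_gen[mu_gt1 [_ q_gen]]]; exact: phi_kills q_gen.
by move/eqP; rewrite map_mx_eq0 => /eqP.
Qed.

Lemma eigenvector_in_unstable_subspace (R : realType) N (A : 'M[R]_N) mu
    (w : 'cV[R]_N) :
  1 < mu -> w != 0 -> A *m w = mu *: w -> in_unstable_subspace A w.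
Proof.
move=> mu_gt1 w_neq0 Aw.
have cAw : cplx A *m cplx w = mu%:C%C *: cplx w by rewrite /cplx -map_mxM Aw map_mxZ.
exists [:: (mu%:C%C, cplx w)]; split; last by rewrite big_seq1.
move=> q; rewrite inE => /eqP -> /=; split; [|split].
- by rewrite ger0_norm ?ler0c ?ltcR // ltW // (lt_trans ltr01).
- by apply: eigenvector_root_char cAw; rewrite map_mx_eq0.
- by exists 1%N; rewrite expr1 mulmxBl cAw mul_scalar_mx subrr.
Qed.

Section StackedVectors.
Variables (R : realType) (n : nat).

Lemma DG_stack_vec (alpha beta l mu : R) (H : 'M[R]_n) (x : 'cV[R]_n) :
  H *m x = l *: x -> mu ^+ 2 - (1 + beta - alpha * l) * mu + beta = 0 -> mu != 0 ->
  DG alpha beta H *m stack_vec mu x = mu *: stack_vec mu x.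
Proof.
move=> Hx mu_root mu_neq0.
rewrite /DG /stack_vec mul_block_col scale_col_mx mul1mx mul0mx addr0 scalerA.
rewrite divff // scale1r; congr col_mx.
rewrite mulmxBl mul_scalar_mx -scalemxAl Hx scalerA mulNmx mul_scalar_mx scalerA.
rewrite -!scalerBl; congr (_ *: _).
apply: (mulfI mu_neq0); rewrite !mulrBr [mu * (beta / mu)]mulrCA divff // mulr1.
by apply: subr0_eq; rewrite -oppr0 -mu_root; ring.
Qed.

Lemma stack_vec_neq0 mu (x : 'cV[R]_n) : x != 0 -> stack_vec mu x != 0.
Proof. by rewrite col_mx_eq0 negb_and => ->. Qed.

Lemma stack_vec_orthogonal mu nu (x y : 'cV[R]_n) :
  x^T *m y = 0 -> (stack_vec mu x)^T *m stack_vec nu y = 0.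
Proof.
move=> xy0; rewrite tr_col_mx mul_row_col linearZ /= linearZ /= -scalemxAl.
by rewrite xy0 !scaler0 addr0.
Qed.

End StackedVectors.

Section OrthonormalFamily.
Variables (F : fieldType) (n : nat) (v : nat -> 'cV[F]_n).
Hypothesis v_orthonormal :
  forall i j, (i < n)%N -> (j < n)%N -> (v i)^T *m v j = (i == j)%:R%:M.

Lemma orthonormal_neq0 i : (i < n)%N -> v i != 0.
Proof.
move=> i_lt; apply/eqP => vi0; have := v_orthonormal i_lt i_lt.
rewrite vi0 trmx0 mul0mx eqxx => /matrixP/(_ 0 0); rewrite !mxE /= => /eqP.
by rewrite eq_sym oner_eq0.
Qed.

Lemma orthonormal_orthogonal i j : (i < n)%N -> (j < n)%N -> i != j ->
  (v i)^T *m v j = 0.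
Proof. by move=> i_lt j_lt /negbTE ij; rewrite v_orthonormal // ij raddf0. Qed.

Lemma orthonormal_coef (c : nat -> F) np i : (np <= i < n)%N ->
  (v i)^T *m \sum_(np <= j < n) c j *: v j = (c i)%:M.
Proof.
move=> /andP[np_le i_lt]; rewrite mulmx_sumr.
rewrite (bigD1_seq i) ?mem_index_iota ?np_le ?iota_uniq //=.
rewrite -scalemxAr v_orthonormal // eqxx scale_scalar_mx mulr1 big1_seq ?addr0 // => j.
rewrite mem_index_iota => /andP[j_neq_i /andP[_ j_lt]].
by rewrite -scalemxAr (orthonormal_orthogonal i_lt j_lt) ?scaler0 // eq_sym.
Qed.

Lemma orthonormal_sum_mul (lam : nat -> F) i : (i < n)%N ->
  (\sum_(j < n) lam j *: (v j *m (v j)^T)) *m v i = lam i *: v i.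
Proof.
move=> i_lt; rewrite mulmx_suml (bigD1 (Ordinal i_lt)) //= big1 ?addr0 => [|j j_neq_i].
  by rewrite -scalemxAl -mulmxA v_orthonormal // eqxx mulmx1.
have /negbTE ji_neq : (j : nat) != i by apply: contraNneq j_neq_i => ji; exact/eqP/val_inj.
by rewrite -scalemxAl -mulmxA v_orthonormal // ji_neq mul_mx_scalar !scale0r scaler0.
Qed.

Lemma orthonormal_trmx_mul_sum (lam : nat -> F) i : (i < n)%N ->
  (v i)^T *m \sum_(j < n) lam j *: (v j *m (v j)^T) = lam i *: (v i)^T.
Proof.
move=> i_lt; rewrite -[LHS]trmxK trmx_mul trmxK linear_sum /=.
under eq_bigr do rewrite linearZ /= trmx_mul trmxK.
by rewrite orthonormal_sum_mul // linearZ.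
Qed.

Lemma orthonormal_sum_mul_trmx : \sum_(i < n) v i *m (v i)^T = 1%:M.
Proof.
pose V : 'M[F]_n := \matrix_(k, i) v i k 0.
have VtV : V^T *m V = 1%:M.
  apply/matrixP => i j; rewrite !mxE.
  have /matrixP/(_ 0 0) := v_orthonormal (ltn_ord i) (ltn_ord j).
  rewrite !mxE /= mulr1n => <-.
  by apply: eq_bigr => k _; rewrite !mxE.
rewrite -(mulmx1C VtV); apply/matrixP => k l; rewrite summxE !mxE.
by apply: eq_bigr => i _; rewrite !mxE big_ord1 !mxE.
Qed.

Lemma orthonormal_expand np (x : 'cV[F]_n) : (np <= n)%N ->
  (forall i, (i < np)%N -> (v i)^T *m x = 0) ->
  x = \sum_(np <= i < n) ((v i)^T *m x) 0 0 *: v i.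
Proof.
move=> np_le x_perp.
transitivity (\sum_(0 <= i < n) ((v i)^T *m x) 0 0 *: v i).
  rewrite big_mkord -{1}[x]mul1mx -orthonormal_sum_mul_trmx mulmx_suml.
  by apply: eq_bigr => i _; rewrite -mulmxA {1}[(v i)^T *m x]mx11_scalar mul_mx_scalar.
rewrite (big_cat_nat (leq0n np) np_le) /= big_nat_cond big1 ?add0r // => i.
by case/andP => /andP[_ i_lt] _; rewrite x_perp // mxE scale0r.
Qed.

End OrthonormalFamily.

Section HeavyBallJacobian.
Variables (R : realType) (n : nat) (lam : nat -> R) (v : nat -> 'cV[R]_n).
Variables (alpha beta : R).
Hypothesis v_orthonormal :
  forall i j, (i < n)%N -> (j < n)%N -> (v i)^T *m v j = (i == j)%:R%:M.

Local Notation H := (\sum_(i < n) lam i *: (v i *m (v i)^T)).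
Local Notation A := (DG alpha beta H).
Local Notation mu i := (mu_hi alpha beta (lam i)).
Local Notation u i := (stack_vec (mu i) (v i)).

Definition coord_top i : 'rV[R]_(n + n) := row_mx (v i)^T 0.
Definition coord_bot i : 'rV[R]_(n + n) := row_mx 0 (v i)^T.

Lemma coord_top_mul i (w : 'cV[R]_(n + n)) : coord_top i *m w = (v i)^T *m usubmx w.
Proof. by rewrite -{1}[w]vsubmxK mul_row_col mul0mx addr0. Qed.

Lemma coord_bot_mul i (w : 'cV[R]_(n + n)) : coord_bot i *m w = (v i)^T *m dsubmx w.
Proof. by rewrite -{1}[w]vsubmxK mul_row_col mul0mx add0r. Qed.

Lemma coord_top_DG i : (i < n)%N ->
  coord_top i *m A = (1 + beta - alpha * lam i) *: coord_top i - beta *: coord_bot i.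
Proof.
move=> i_lt; rewrite /DG mul_row_block !mul0mx !addr0 mulmxBr mul_mx_scalar -scalemxAr.
rewrite orthonormal_trmx_mul_sum // mulmxN mul_mx_scalar !scale_row_mx !scaler0.
by rewrite opp_row_mx add_row_mx oppr0 addr0 add0r scalerA -scalerBl.
Qed.

Lemma coord_bot_DG i : coord_bot i *m A = coord_top i.
Proof. by rewrite /DG mul_row_block !mul0mx mulmx1 mulmx0 !add0r. Qed.

Lemma cplx_coord_top_DG i : (i < n)%N ->
  cplx (coord_top i) *m cplx A =
  (1 + beta - alpha * lam i)%:C%C *: cplx (coord_top i) - beta%:C%C *: cplx (coord_bot i).
Proof. by move=> i_lt; rewrite /cplx -map_mxM coord_top_DG // map_mxB !map_mxZ. Qed.

Lemma cplx_coord_bot_DG i : cplx (coord_bot i) *m cplx A = cplx (coord_top i).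
Proof. by rewrite /cplx -map_mxM coord_bot_DG. Qed.


Lemma DG_eigenvector i : (i < n)%N -> 0 < beta -> alpha * lam i < 0 ->
  A *m u i = mu i *: u i.
Proof.
move=> i_lt beta_gt0 al_lt0; apply: DG_stack_vec.
- exact: orthonormal_sum_mul.
- exact: mu_hi_root.
- by rewrite gt_eqF // (lt_trans ltr01) ?mu_hi_gt1.
Qed.

Lemma stack_vec_sum_independent np (c : nat -> R) :
  \sum_(np <= i < n) c i *: u i = 0 ->
  forall i, (np <= i)%N -> (i < n)%N -> c i = 0.
Proof.
move=> c_sum0 i i_ge i_lt.
have : (v i)^T *m usubmx (\sum_(np <= j < n) c j *: u j) = (c i)%:M.
  rewrite linear_sum /=; under eq_bigr do rewrite linearZ /= /stack_vec col_mxKu.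
  by apply: orthonormal_coef; rewrite ?i_ge.
by rewrite c_sum0 linear0 mulmx0 => /matrixP/(_ 0 0); rewrite !mxE /= mulr1n.
Qed.

Lemma stable_coords_vanish i (w : 'cV[R]_(n + n)) : (i < n)%N -> beta <= 1 ->
  0 <= alpha * lam i <= 2 + 2 * beta -> in_unstable_subspace A w ->
  coord_top i *m w = 0 /\ coord_bot i *m w = 0.
Proof.
move=> i_lt beta_le1 /andP[al_ge0 al_le] w_unstable.
have kill mu x : 1 < `|mu| -> gen_eigvec (cplx A) mu x ->
    cplx (coord_top i) *m x = 0 /\ cplx (coord_bot i) *m x = 0.
  move=> mu_gt1; apply: companion_genvec_orthogonal;
    [exact: cplx_coord_top_DG | exact: cplx_coord_bot_DG |].
  by apply: quadratic_roots_in_disk => //; apply/andP; split; lra.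
by split; apply: in_unstable_subspace_annihilated w_unstable => mu x mu_gt1
  /(kill _ _ mu_gt1)[].
Qed.

Lemma unstable_coords_relation i (w : 'cV[R]_(n + n)) : (i < n)%N -> 0 < beta ->
  alpha * lam i < 0 -> in_unstable_subspace A w ->
  coord_bot i *m w = (mu i)^-1 *: (coord_top i *m w).
Proof.
move=> i_lt beta_gt0 al_lt0 w_unstable.
set lo := mu_lo alpha beta (lam i).
have : (lo *: coord_top i - beta *: coord_bot i) *m w = 0.
  apply: in_unstable_subspace_annihilated w_unstable => mu x mu_gt1.
  rewrite /cplx map_mxB !map_mxZ -!/(cplx _).
  apply: left_eigen_genvec_orthogonal.
  - apply: companion_left_eigen; [exact: cplx_coord_top_DG | exact: cplx_coord_bot_DG |].
    by rewrite -rmorphXn -!rmorphM -rmorphB -rmorphD mu_lo_root // rmorph0.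
  - rewrite eq_sym; apply: real_neq_out_disk mu_gt1.
    by rewrite ger0_norm ltW ?mu_lo_gt0 ?mu_lo_lt1.
rewrite mulmxBl -!scalemxAl => /eqP; rewrite subr_eq0 => /eqP lo_top.
have mu_neq0 : mu i != 0 by rewrite gt_eqF // (lt_trans ltr01) ?mu_hi_gt1.
have loE : lo = beta / mu i.
  by apply: (canRL (mulfK mu_neq0)); rewrite mulrC mu_hi_mul_lo.
apply: (@scalerI _ _ beta); first by rewrite gt_eqF.
by rewrite -lo_top scalerA loE.
Qed.

Lemma unstable_subspace_span np (w : 'cV[R]_(n + n)) : (np <= n)%N ->
  0 < beta -> beta <= 1 ->
  (forall i, (i < np)%N -> 0 <= alpha * lam i <= 2 + 2 * beta) ->
  (forall i, (np <= i)%N -> (i < n)%N -> alpha * lam i < 0) ->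
  in_unstable_subspace A w ->
  w = \sum_(np <= i < n) (coord_top i *m w) 0 0 *: u i.
Proof.
move=> np_le beta_gt0 beta_le1 stable unstable w_unstable.
have vanish i : (i < np)%N -> coord_top i *m w = 0 /\ coord_bot i *m w = 0.
  move=> i_lt; apply: stable_coords_vanish (stable i i_lt) w_unstable => //.
  exact: leq_trans i_lt np_le.
have top_expand : usubmx w = \sum_(np <= i < n) (coord_top i *m w) 0 0 *: v i.
  rewrite {1}(orthonormal_expand v_orthonormal np_le (x := usubmx w)) => [|i i_lt].
    by apply: eq_big_nat => i _; rewrite coord_top_mul.
  by rewrite -coord_top_mul (vanish i i_lt).1.
have bot_expand :
    dsubmx w = \sum_(np <= i < n) (coord_top i *m w) 0 0 *: ((mu i)^-1 *: v i).
  rewrite {1}(orthonormal_expand v_orthonormal np_le (x := dsubmx w)) => [|i i_lt].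
    apply: eq_big_nat => i /andP[i_ge i_lt].
    by rewrite -coord_bot_mul unstable_coords_relation ?unstable // mxE scalerA mulrC.
  by rewrite -coord_bot_mul (vanish i i_lt).2.
rewrite -[LHS]vsubmxK top_expand bot_expand -[RHS]vsubmxK !linear_sum /=.
by congr col_mx; apply: eq_bigr => i _; rewrite [RHS]linearZ /= /stack_vec ?col_mxKu ?col_mxKd.
Qed.


End HeavyBallJacobian.

Theorem corollary2p5 (R : realType) (n r p : nat) (f : 'cV[R]_n -> R) (L : R)
  (xs : 'cV[R]_n) (lam : nat -> R) (v : nat -> 'cV[R]_n) (alpha beta : R) :
  (1 <= r)%N ->
  Ck (r.+1) f ->
  grad_lipschitz f L ->
  grad f xs = 0 ->
  (forall i j, (i < n)%N -> (j < n)%N -> (v i)^T *m v j = (i == j)%:R%:M) ->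
  hessian f xs = \sum_(i < n) lam i *: (v i *m (v i)^T) ->
  (1 <= p)%N -> (p < n)%N ->
  (forall i j, (i <= j)%N -> (j < n)%N -> lam j <= lam i) ->
  (forall i, (i < n - p)%N -> 0 <= lam i) ->
  (forall i, (n - p <= i)%N -> (i < n)%N -> lam i < 0) ->
  0 < lam 0%N ->
  0 < alpha -> alpha < 4 / lam 0%N ->
  Num.max (-1 + alpha * lam 0%N / 2) 0 < beta -> beta < 1 ->
  let A := DG alpha beta (hessian f xs) in
  let mu := fun i => mu_hi alpha beta (lam i) in
  let u := fun i => stack_vec (mu i) (v i) in
  (* each u_i is an eigenvector of A for the eigenvalue mu_i > 1,
     lying in the unstable invariant subspace *)
  (forall i, (n - p <= i)%N -> (i < n)%N ->
     [/\ 1 < mu i, u i != 0, A *m u i = mu i *: u i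
       & in_unstable_subspace A (u i)]) /\
  (* pairwise orthogonal *)
  (forall i j, (n - p <= i)%N -> (i < n)%N -> (n - p <= j)%N -> (j < n)%N ->
     i <> j -> (u i)^T *m u j = 0) /\
  (* linearly independent *)
  (forall c : nat -> R, \sum_(n - p <= i < n) c i *: u i = 0 ->
     forall i, (n - p <= i)%N -> (i < n)%N -> c i = 0) /\
  (* spanning the unstable invariant subspace *)
  (forall w : 'cV[R]_(n + n), in_unstable_subspace A w ->
     exists c : nat -> R, w = \sum_(n - p <= i < n) c i *: u i).
Proof.
move=> _ _ _ _ v_orth -> _ _ lam_anti lam_stable lam_unstable _ alpha_gt0 _.
rewrite gt_max => /andP[beta_lb beta_gt0] beta_lt1 A mu u.
have unstable i : (n - p <= i)%N -> (i < n)%N -> alpha * lam i < 0.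
  by move=> i_ge i_lt; rewrite pmulr_rlt0 // lam_unstable.
have stable i : (i < n - p)%N -> 0 <= alpha * lam i <= 2 + 2 * beta.
  move=> i_lt; have lam_ge0 := lam_stable i i_lt.
  have lam_le := lam_anti 0%N i (leq0n i) (leq_trans i_lt (leq_subr p n)).
  by apply/andP; split; nra.
split; [|split; [|split]].
- move=> i i_ge i_lt; have al_lt0 := unstable i i_ge i_lt.
  have mu_gt1 := mu_hi_gt1 beta_gt0 al_lt0.
  have u_neq0 := stack_vec_neq0 (mu i) (orthonormal_neq0 v_orth i_lt).
  have Au := DG_eigenvector v_orth i_lt beta_gt0 al_lt0.
  by split => //; apply: eigenvector_in_unstable_subspace mu_gt1 u_neq0 Au.
- move=> i j _ i_lt _ j_lt /eqP ij; apply: stack_vec_orthogonal.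
  exact: orthonormal_orthogonal.
- exact: stack_vec_sum_independent.
- move=> w w_unstable; exists (fun i => (coord_top v i *m w) 0 0).
  exact: (unstable_subspace_span v_orth (leq_subr p n) beta_gt0 (ltW beta_lt1)
    stable unstable w_unstable).
Qed.
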